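(* Let $A$ be a Hermitian operator on $\mathbb{C}^N$ with $N$ distinct eigenvalues (non-degenerate), and $B$ a Hermitian operator on $\mathbb{C}^N$ with $N'$ distinct eigenvalues. If the KD distribution of $(A,B)$ distinguishes all states (i.e. $\rho\mapsto K^{A,B}_\rho$ is injective on density operators on $\mathbb{C}^N$), then $N'\ge\frac{N^2+N-1}{2N-1}$. In particular, for $N=2$ and $N=3$, $B$ must be non-degenerate.
   Context: A density operator is a positive semidefinite trace-one operator. Kirkwood–Dirac (KD) distribution: for Hermitian operators $A_1,\dots,A_n$ on $\mathbb{C}^N$ and a density operator $\rho$, define $\#^{K}_{A_1,\dots,A_n}(x)=(2\pi)^{-n}\int_{\mathbb{R}^n} e^{-is_1A_1}\cdots e^{-is_nA_n}\,e^{i s\cdot x}\,d^ns$ (inverse Fourier transform in the distributional sense), and $K^{A_1,\dots,A_n}_\rho(x)=\mathrm{Tr}[\#^{K}_{A_1,\dots,A_n}(x)\,\rho]$. *)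

From HB Require Import structures.
From mathcomp Require Import all_boot all_order all_algebra.
From mathcomp Require Import sesquilinear spectral.
From mathcomp Require Import complex.
From mathcomp Require Import reals.

Set Implicit Arguments.
Unset Strict Implicit.
Unset Printing Implicit Defensive.

Import Order.TTheory GRing.Theory Num.Theory.
Local Open Scope ring_scope.
Local Open Scope complex_scope.
Local Open Scope sesquilinear_scope.

Section KD.
Variable R : realType.
Local Notation C := (R[i]).

Definition hermitian_op (N : nat) (A : 'M[C]_N) : Prop := A \is hermsymmx.

Definition density (N : nat) (rho : 'M[C]_N) : Prop :=
  [/\ rho \is hermsymmx,
      (forall v : 'rV[C]_N, 0 <= (v *m rho *m v ^t*) 0 0)
    & \tr rho = 1].

Definition num_distinct_eigs (N : nat) (A : 'M[C]_N) (k : nat) : Prop :=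
  exists s : seq C, [/\ uniq s, size s = k & forall a, eigenvalue A a = (a \in s)].

(* Spectral projector of a Hermitian A at the real point x: the orthogonal
   projector onto the eigenspace ker (A - x), zero if x is not an eigenvalue. *)
Definition specproj (N : nat) (A : 'M[C]_N) (x : R) : 'M[C]_N :=
  proj_ortho (eigenspace A x%:C).

(* For Hermitian A, B
   the distribution (2pi)^-2 \int Tr[e^{-is1 A} e^{-is2 B} rho] e^{i s.x} ds
   equals  sum_x Tr[P_A(x1) P_B(x2) rho] delta_x ; we represent it by its
   (finitely supported) weight function x |-> Tr[P_A(x1) P_B(x2) rho]. *)
Definition KD (N : nat) (A B : 'M[C]_N) (rho : 'M[C]_N) : R * R -> C :=
  fun x => \tr (specproj A x.1 *m specproj B x.2 *m rho).

Definition KD_distinguishes (N : nat) (A B : 'M[C]_N) : Prop :=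
  forall rho1 rho2 : 'M[C]_N, density rho1 -> density rho2 ->
    KD A B rho1 = KD A B rho2 -> rho1 = rho2.

End KD.

(* Injectivity of the KD map on states gives injectivity on traceless Hermitian
   matrices H, since the normalisations of (1 + H)^2 and (1 - H)^2 are states with
   the same trace differing by a multiple of H.  Let p + 1 = N and q + 1 = N' count
   the spectral projectors P_a of A and Q_b of B.  For Hermitian H the KD weights
   tr (P_a Q_b H) have real row sums tr (P_a H) and real column sums tr (Q_b H), so
   tr H = 0 together with the vanishing of all weights amounts to 1 + 2pq + p + q
   real linear conditions.  Hermitian matrices form a real space of dimension N^2,
   hence N^2 <= 1 + 2pq + p + q = 2NN' - N - N' + 1, that is
   N' (2N - 1) >= N^2 + N - 1.  For N = 2, 3 this forces N' >= N, and N' <= N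
   always holds. *)

From HB Require Import structures.
From mathcomp Require Import all_boot all_order all_algebra.
From mathcomp Require Import sesquilinear spectral complex reals.
From mathcomp Require Import zify lra.
From mathcomp Require boolp.

Set Implicit Arguments.
Unset Strict Implicit.
Unset Printing Implicit Defensive.

Import Order.TTheory GRing.Theory Num.Theory.
Local Open Scope ring_scope.
Local Open Scope sesquilinear_scope.

Section ConjugateTranspose.
Variable C : numClosedFieldType.

Lemma trmxCM m n p (A : 'M[C]_(m, n)) (B : 'M[C]_(n, p)) :
  (A *m B)^t* = B^t* *m A^t*.
Proof. by rewrite trmx_mul map_mxM. Qed.

Lemma trmxCD m n (A B : 'M[C]_(m, n)) : (A + B)^t* = A^t* + B^t*.
Proof. by rewrite linearD map_mxD. Qed.

Lemma trmxCN m n (A : 'M[C]_(m, n)) : (- A)^t* = - A^t*.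
Proof. by rewrite linearN map_mxN. Qed.

Lemma trmxCZ m n a (A : 'M[C]_(m, n)) : (a *: A)^t* = a^* *: A^t*.
Proof. by rewrite linearZ map_mxZ. Qed.

Lemma trmxC1 n : (1%:M : 'M[C]_n)^t* = 1%:M.
Proof. by rewrite trmx1 map_mx1. Qed.

Lemma mxtrace_trmxC n (M : 'M[C]_n) : \tr (M^t*) = (\tr M)^*.
Proof. by rewrite trace_map_mx mxtrace_tr. Qed.

Lemma hermsymmxP n (M : 'M[C]_n) : reflect (M^t* = M) (M \is hermsymmx).
Proof.
by apply: (iffP (is_hermitianmxP _ _ _)); rewrite expr0 scale1r.
Qed.

Lemma mxtrace_herm_sqr_ge0 n (M : 'M[C]_n) : M^t* = M -> 0 <= \tr (M *m M).
Proof.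
move=> hM; rewrite sumr_ge0 // => i _; rewrite mxE sumr_ge0 // => j _.
by rewrite -[in M j i]hM !mxE; apply: mul_conjC_ge0.
Qed.

Lemma herm_sqr_form_ge0 n (M : 'M[C]_n) (v : 'rV[C]_n) : M^t* = M ->
  0 <= (v *m (M *m M) *m v^t*) 0 0.
Proof.
move=> hM; have -> : v *m (M *m M) *m v^t* = (v *m M) *m (v *m M)^t*.
  by rewrite trmxCM hM !mulmxA.
by rewrite mxE sumr_ge0 // => j _; rewrite !mxE; apply: mul_conjC_ge0.
Qed.

Lemma real_add_conjC_eq0 (x : C) :
  x^* = x -> x + x^* = 0 -> x = 0.
Proof. by move=> -> /eqP; rewrite -mulr2n mulrn_eq0 => /eqP. Qed.

Lemma mxtrace_mulmx_herm_real n (A B : 'M[C]_n) :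
  A^t* = A -> B^t* = B -> (\tr (A *m B))^* = \tr (A *m B).
Proof. by move=> hA hB; rewrite -mxtrace_trmxC trmxCM hA hB mxtrace_mulC. Qed.

Lemma addmx_self_eq0 m n (X : 'M[C]_(m, n)) : X + X = 0 -> X = 0.
Proof. by move/eqP; rewrite -mulr2n -scaler_nat scaler_eq0 pnatr_eq0 => /eqP. Qed.

End ConjugateTranspose.

Section SpectralProjectors.
Variable C : numClosedFieldType.

Local Notation "B ^!" :=
  (orthomx Num.conj_op (mx_of_hermitian (hermitian1mx _)) B) : matrix_set_scope.

Lemma proj_ortho_herm p n (U : 'M[C]_(p, n)) : (proj_ortho U)^t* = proj_ortho U.
Proof.
set P := proj_ortho U.
have P_U : (P <= U)%MS by rewrite -[P]mul1mx proj_ortho_sub.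
have compl_Uo : (1%:M - P <= U^!)%MS.
  by have := proj_ortho_compl_sub U (1%:M : 'M_n); rewrite mul1mx.
have /orthomx1P : (P <= (1%:M - P)^!)%MS.
  by apply: submx_trans P_U _; rewrite orthomx_sym compl_Uo.
rewrite trmxCD trmxCN trmxC1 mulmxDr mulmx1 mulmxN => /eqP.
rewrite subr_eq0 => /eqP P_PPt.
by rewrite P_PPt trmxCM trmxCK -P_PPt.
Qed.

Lemma proj_ortho_eigenspace_eq0 n (A : 'M[C]_n) a :
  ~~ eigenvalue A a -> proj_ortho (eigenspace A a) = 0.
Proof.
rewrite negbK => /eqP E0; apply/eqP.
by rewrite -mxrank_eq0 (proj_orthoE _) E0 mxrank0.
Qed.

Lemma eigenspace_orthogonal n (A : 'M[C]_n) a b :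
  A \is hermsymmx -> b^* = b -> a != b ->
  eigenspace A a *m (eigenspace A b)^t* = 0.
Proof.
move=> /hermsymmxP hA b_real neq_ab.
set Ea := eigenspace A a; set Eb := eigenspace A b.
have EaA : Ea *m A = a *: Ea by apply/eigenspaceP.
have EbA : Eb *m A = b *: Eb by apply/eigenspaceP.
have : Ea *m A *m Eb^t* = a *: (Ea *m Eb^t*) by rewrite EaA -scalemxAl.
rewrite -mulmxA -[in A *m _]hA -trmxCM EbA trmxCZ b_real -scalemxAr => /eqP.
rewrite -subr_eq0 -scalerBl scaler_eq0 subr_eq0 eq_sym (negbTE neq_ab) /=.
by move/eqP.
Qed.

Lemma sum_proj_eigenspace n (A : 'M[C]_n) (s : seq C) :
  A \is hermsymmx -> uniq s -> {subset eigenvalue A <= s} ->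
  \sum_(a <- s) proj_ortho (eigenspace A a) = 1%:M.
Proof.
move=> hA s_uniq eig_s.
set U := spectralmx A; set d := spectral_diag A.
have U_unit : U \in unitmx := spectral_unit A.
have UA : U *m A = diag_mx d *m U.
  by rewrite {1}(orthomx_spectralP (hermitian_normalmx hA)) !mulmxA mulmxV ?mul1mx.
have row_eig k : (row k U <= eigenspace A (d 0 k))%MS.
  apply/eigenspaceP; rewrite -row_mul UA mul_diag_mx.
  by apply/rowP => j; rewrite !mxE.
have d_real k : (d 0 k)^* = d 0 k.
  by apply/CrealP; have /mxOverP := hermitian_spectral_diag_real hA; apply.
have d_s k : d 0 k \in s.
  apply/eig_s/eigenvalueP; exists (row k U); first exact/eigenspaceP.
  apply: contra_neq (oner_neq0 C) => Uk0.
  have := congr1 (fun M => (M *m invmx U) 0 k) Uk0.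
  by rewrite -row_mul mulmxV // mul0mx !mxE eqxx.
have row_orth k a : a != d 0 k -> row k U *m proj_ortho (eigenspace A a) = 0.
  move=> neq_a; apply: proj_ortho_0; rewrite orthomx_sym; apply/orthomx1P.
  have /submxP [w ->] := row_eig k.
  by rewrite trmxCM mulmxA eigenspace_orthogonal // mul0mx.
set S := \sum_(a <- s) _.
have US : U *m S = U.
  apply/row_matrixP => k; rewrite row_mul mulmx_sumr (bigD1_seq (d 0 k)) //=.
  by rewrite proj_ortho_id // big1 ?addr0 // => a; apply: row_orth.
by rewrite -[S](mulKmx U_unit) US mulVmx.
Qed.

End SpectralProjectors.

Lemma uniq_eigenvalues_leq (F : fieldType) n (A : 'M[F]_n) (s : seq F) :
  uniq s -> {subset s <= eigenvalue A} -> (size s <= n)%N.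
Proof.
move=> s_uniq s_eig; rewrite -ltnS -(size_char_poly A).
apply: max_poly_roots => //; first exact: monic_neq0 (char_poly_monic A).
by apply/allP => a /s_eig; rewrite -eigenvalue_root_char.
Qed.

Section TraceOrthogonal.
Variable C : numClosedFieldType.

Lemma mxtrace_mulmx_mxvec n (K X : 'M[C]_n) :
  \tr (K *m X) = \sum_e (mxvec X) 0 e * (mxvec K^T) 0 e.
Proof.
rewrite (reindex _ (curry_mxvec_bij _ _)) /= /mxtrace.
under [LHS]eq_bigr do rewrite mxE.
rewrite exchange_big pair_bigA.
by apply: eq_bigr => -[i j] _; rewrite !mxvecE mxE mulrC.
Qed.

Lemma exists_mxtrace_orthogonal n (Ks : seq 'M[C]_n) : (size Ks < n * n)%N ->
  exists2 X : 'M[C]_n, X != 0 & {in Ks, forall K, \tr (K *m X) = 0}.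
Proof.
move=> size_Ks.
pose M : 'M[C]_(n * n, size Ks) := \matrix_(e, l) (mxvec (nth 0 Ks l)^T) 0 e.
have : kermx M != 0.
  by rewrite -mxrank_eq0 mxrank_ker subn_eq0 -ltnNge (leq_ltn_trans (rank_leq_col M)).
case/rowV0Pn => u /sub_kermxP uM u0.
exists (vec_mx u); first by rewrite vec_mx_eq0.
move=> K /[dup] K_Ks; rewrite -index_mem => lt_K.
have := congr1 (fun v : 'rV_(size Ks) => v 0 (Ordinal lt_K)) uM; rewrite !mxE => <-.
by rewrite mxtrace_mulmx_mxvec vec_mxK; apply: eq_bigr => e _; rewrite !mxE nth_index.
Qed.

Lemma exists_herm_mxtrace_orthogonal n (Ks : seq 'M[C]_n) :
  (size Ks < n * n)%N -> {in Ks, forall K, K^t* \in Ks} ->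
  exists H : 'M[C]_n, [/\ H != 0, H^t* = H & {in Ks, forall K, \tr (K *m H) = 0}].
Proof.
move=> size_Ks Ks_adj; have [X X0 KX] := exists_mxtrace_orthogonal size_Ks.
have KXt : {in Ks, forall K, \tr (K *m X^t*) = 0}.
  move=> K /Ks_adj /KX trKtX.
  by rewrite -[LHS]conjCK -mxtrace_trmxC trmxCM trmxCK mxtrace_mulC trKtX conjC0.
(* either X + X^t* is nonzero, or X^t* = - X and then 'i *: X is Hermitian *)
have [/eqP|XXt0] := eqVneq (X + X^t*) 0.
- rewrite addrC addr_eq0 => /eqP Xt; exists ('i *: X); split.
  + by rewrite scaler_eq0 negb_or neq0Ci.
  + by rewrite trmxCZ conjCi Xt scaleNr scalerN opprK.
  + by move=> K K_Ks; rewrite -scalemxAr mxtraceZ KX // mulr0.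
- exists (X + X^t*); split => //.
  + by rewrite trmxCD trmxCK addrC.
  + by move=> K K_Ks; rewrite mulmxDr mxtraceD KX // KXt // addr0.
Qed.

End TraceOrthogonal.

Section KDConstraints.
Variables (C : numClosedFieldType) (n : nat) (P Q : C -> 'M[C]_n).
Variables (a0 b0 : C) (ra rb : seq C).
Hypotheses (P_herm : forall a, (P a)^t* = P a) (Q_herm : forall b, (Q b)^t* = Q b).
Hypothesis sum_P : \sum_(a <- a0 :: ra) P a = 1%:M.
Hypothesis sum_Q : \sum_(b <- b0 :: rb) Q b = 1%:M.

(* As functionals X |-> \tr (K *m X), these are the 1 + 2pq + p + q conditions of
   the dimension count (p = size ra, q = size rb): on Hermitian X the last two
   blocks are twice the real parts of the weights in column b0 and in row a0. *)
Definition kd_constraints : seq 'M[C]_n :=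
  1%:M :: [seq P a *m Q b | a <- ra, b <- rb] ++ [seq Q b *m P a | a <- ra, b <- rb]
    ++ [seq P a *m Q b0 + Q b0 *m P a | a <- ra]
    ++ [seq P a0 *m Q b + Q b *m P a0 | b <- rb].

Lemma size_kd_constraints :
  size kd_constraints = (1 + 2 * size ra * size rb + size ra + size rb)%N.
Proof. rewrite /= !size_cat !size_map !size_allpairs; lia. Qed.

Lemma kd_constraints_PQ a b :
  a \in ra -> b \in rb -> P a *m Q b \in kd_constraints.
Proof.
by move=> a_ra b_rb; rewrite inE mem_cat (allpairs_f (fun a b => P a *m Q b)) ?orbT.
Qed.

Lemma kd_constraints_QP a b :
  a \in ra -> b \in rb -> Q b *m P a \in kd_constraints.
Proof.
move=> a_ra b_rb.
by rewrite inE !mem_cat (allpairs_f (fun a b => Q b *m P a)) ?orbT.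
Qed.

Lemma kd_constraints_col a :
  a \in ra -> P a *m Q b0 + Q b0 *m P a \in kd_constraints.
Proof.
by move=> a_ra; rewrite inE !mem_cat (map_f (fun a => P a *m Q b0 + Q b0 *m P a)) ?orbT.
Qed.

Lemma kd_constraints_row b :
  b \in rb -> P a0 *m Q b + Q b *m P a0 \in kd_constraints.
Proof.
by move=> b_rb; rewrite inE !mem_cat (map_f (fun b => P a0 *m Q b + Q b *m P a0)) ?orbT.
Qed.

Lemma kd_constraints_trmxC : {in kd_constraints, forall K, K^t* \in kd_constraints}.
Proof.
move=> K; rewrite inE !mem_cat => /predU1P[-> | ]; first by rewrite trmxC1 mem_head.
case/or4P.
- case/allpairsP => -[a b] /= [a_ra b_rb ->].
  by rewrite trmxCM P_herm Q_herm kd_constraints_QP.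
- case/allpairsP => -[a b] /= [a_ra b_rb ->].
  by rewrite trmxCM P_herm Q_herm kd_constraints_PQ.
- case/mapP => a a_ra ->.
  by rewrite trmxCD !trmxCM P_herm Q_herm addrC kd_constraints_col.
- case/mapP => b b_rb ->.
  by rewrite trmxCD !trmxCM P_herm Q_herm addrC kd_constraints_row.
Qed.

Section Annihilated.
Variable H : 'M[C]_n.
Hypothesis H_herm : H^t* = H.
Hypothesis H_constraints : {in kd_constraints, forall K, \tr (K *m H) = 0}.

Local Notation w a b := (\tr (P a *m Q b *m H)).

Lemma mxtrace_kd_constraints_eq0 : \tr H = 0.
Proof. by rewrite -[H]mul1mx H_constraints ?mem_head. Qed.

Lemma kd_weight_row_sum a : \sum_(b <- b0 :: rb) w a b = \tr (P a *m H).
Proof.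
by rewrite -raddf_sum -mulmx_suml -mulmx_sumr sum_Q mulmx1.
Qed.

Lemma kd_weight_col_sum b : \sum_(a <- a0 :: ra) w a b = \tr (Q b *m H).
Proof.
by rewrite -raddf_sum -!mulmx_suml sum_P mul1mx.
Qed.

Lemma kd_weight_eq0 a b : a \in a0 :: ra -> b \in b0 :: rb -> w a b = 0.
Proof.
have conj_w a' b' : (w a' b')^* = \tr (Q b' *m P a' *m H).
  by rewrite -mxtrace_trmxC !trmxCM H_herm P_herm Q_herm mxtrace_mulC.
have inner a' b' : a' \in ra -> b' \in rb -> w a' b' = 0.
  by move=> a_ra b_rb; rewrite H_constraints ?kd_constraints_PQ.
have row_tr a' : a' \in ra -> \tr (P a' *m H) = w a' b0.
  move=> a_ra; rewrite -kd_weight_row_sum big_cons big_seq big1 ?addr0 //.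
  by move=> b'; apply: inner.
have col_tr b' : b' \in rb -> \tr (Q b' *m H) = w a0 b'.
  move=> b_rb; rewrite -kd_weight_col_sum big_cons big_seq big1 ?addr0 //.
  by move=> a' a_ra; apply: inner.
have row0 a' : a' \in ra -> w a' b0 = 0.
  move=> a_ra; apply: real_add_conjC_eq0.
    by rewrite -row_tr // mxtrace_mulmx_herm_real.
  by rewrite conj_w -mxtraceD -mulmxDl H_constraints ?kd_constraints_col.
have col0 b' : b' \in rb -> w a0 b' = 0.
  move=> b_rb; apply: real_add_conjC_eq0.
    by rewrite -col_tr // mxtrace_mulmx_herm_real.
  by rewrite conj_w -mxtraceD -mulmxDl H_constraints ?kd_constraints_row.
have corner : w a0 b0 = 0.
  have := mxtrace_kd_constraints_eq0.
  rewrite -[H in \tr H]mul1mx -sum_P mulmx_suml raddf_sum /= big_cons big_seq big1.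
    by rewrite addr0 -kd_weight_row_sum big_cons big_seq big1 ?addr0 // => b'; apply: col0.
  by move=> a' a_ra; rewrite row_tr // row0.
rewrite !inE => /predU1P[-> | a_ra] /predU1P[-> | b_rb].
- exact: corner.
- exact: col0.
- exact: row0.
- exact: inner.
Qed.

End Annihilated.

Lemma exists_herm_kd_kernel :
  (1 + 2 * size ra * size rb + size ra + size rb < n * n)%N ->
  exists H : 'M[C]_n, [/\ H != 0, H^t* = H, \tr H = 0 &
    forall a b, a \in a0 :: ra -> b \in b0 :: rb -> \tr (P a *m Q b *m H) = 0].
Proof.
rewrite -size_kd_constraints => size_Ks.
have [H [H0 H_herm H_Ks]] :=
  exists_herm_mxtrace_orthogonal size_Ks kd_constraints_trmxC.
exists H; split => //; first exact: mxtrace_kd_constraints_eq0.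
exact: kd_weight_eq0.
Qed.

End KDConstraints.

Lemma exists_herm_eigen_kd_kernel (C : numClosedFieldType) n (A B : 'M[C]_n)
    (sA sB : seq C) : (0 < n)%N -> A \is hermsymmx -> B \is hermsymmx ->
  uniq sA -> (forall a, eigenvalue A a = (a \in sA)) ->
  uniq sB -> (forall b, eigenvalue B b = (b \in sB)) ->
  (2 * size sA * size sB + 1 < n * n + size sA + size sB)%N ->
  exists H : 'M[C]_n, [/\ H != 0, H^t* = H, \tr H = 0 &
    forall a b, \tr (proj_ortho (eigenspace A a) *m proj_ortho (eigenspace B b) *m H) = 0].
Proof.
move=> n_gt0 hA hB uA eigA uB eigB.
case: sA uA eigA => [|a0 ra] uA eigA.
  by have [a] := eigenvalue_closed A n_gt0; rewrite eigA.
case: sB uB eigB => [|b0 rb] uB eigB.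
  by have [b] := eigenvalue_closed B n_gt0; rewrite eigB.
move=> size_lt.
have sum_A : \sum_(a <- a0 :: ra) proj_ortho (eigenspace A a) = 1%:M.
  by apply: sum_proj_eigenspace => // a; rewrite -eigA.
have sum_B : \sum_(b <- b0 :: rb) proj_ortho (eigenspace B b) = 1%:M.
  by apply: sum_proj_eigenspace => // b; rewrite -eigB.
have [|H [H_neq0 hH trH kd_H]] := exists_herm_kd_kernel
  (fun a => proj_ortho_herm _) (fun b => proj_ortho_herm _) sum_A sum_B.
  by move: size_lt => /=; nia.
exists H; split => // a b.
have [eig_a|/proj_ortho_eigenspace_eq0->] := boolP (eigenvalue A a);
  last by rewrite !mul0mx mxtrace0.
have [eig_b|/proj_ortho_eigenspace_eq0->] := boolP (eigenvalue B b);
  last by rewrite mulmx0 mul0mx mxtrace0.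
by apply: kd_H; rewrite -?eigA -?eigB.
Qed.

Section KirkwoodDirac.
Variable R : realType.
Local Notation C := R[i].

Lemma num_distinct_eigs_leq N (A : 'M[C]_N) k : num_distinct_eigs A k -> (k <= N)%N.
Proof.
case=> s [s_uniq <- eigA]; apply: (uniq_eigenvalues_leq (A := A) s_uniq) => a.
by rewrite -eigA.
Qed.

Lemma KDD N (A B X Y : 'M[C]_N) x : KD A B (X + Y) x = KD A B X x + KD A B Y x.
Proof. by rewrite /KD mulmxDr mxtraceD. Qed.

Lemma KDN N (A B X : 'M[C]_N) x : KD A B (- X) x = - KD A B X x.
Proof. by rewrite /KD mulmxN raddfN. Qed.

Lemma KDZ N (A B X : 'M[C]_N) c x : KD A B (c *: X) x = c * KD A B X x.
Proof. by rewrite /KD -scalemxAr mxtraceZ. Qed.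

Lemma density_normalized_sq N (M : 'M[C]_N) : M^t* = M -> \tr (M *m M) != 0 ->
  density ((\tr (M *m M))^-1 *: (M *m M)).
Proof.
move=> hM T_neq0; set T := \tr (M *m M).
have T_gt0 : 0 < T by rewrite lt_def T_neq0 mxtrace_herm_sqr_ge0.
split.
- apply/hermsymmxP; rewrite trmxCZ trmxCM hM fmorphV.
  congr (_^-1 *: _).
  by apply/CrealP; apply: gtr0_real.
- move=> v; rewrite -scalemxAr -scalemxAl mxE.
  apply: mulr_ge0; first by rewrite invr_ge0 ltW.
  exact: herm_sqr_form_ge0.
- by rewrite mxtraceZ mulVf.
Qed.

Lemma KD_distinguishes_kernel_trivial N (A B H : 'M[C]_N) : (0 < N)%N ->
  KD_distinguishes A B -> H^t* = H -> \tr H = 0 -> (forall x, KD A B H x = 0) ->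
  H = 0.
Proof.
move=> N_gt0 hKD hH trH KD_H.
set S := 1%:M + H *m H.
have sqD : (1%:M + H) *m (1%:M + H) = S + (H + H).
  by rewrite mulmxDl !mulmxDr !mul1mx mulmx1 [H + H *m H]addrC addrACA.
have sqB : (1%:M - H) *m (1%:M - H) = S - (H + H).
  rewrite mulmxDl !mulmxDr !mul1mx mulmx1 mulmxN mulNmx opprK.
  by rewrite [- H + H *m H]addrC addrACA opprD.
have trS_neq0 : \tr S != 0.
  by rewrite mxtraceD mxtrace1 gt_eqF // ltr_wpDr ?mxtrace_herm_sqr_ge0 ?ltr0n.
pose rho (X : 'M[C]_N) := (\tr S)^-1 *: (S + X).
have rho_density (M X : 'M[C]_N) :
    M^t* = M -> M *m M = S + X -> \tr X = 0 -> density (rho X).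
  move=> hM MM trX; have trM : \tr (M *m M) = \tr S by rewrite MM mxtraceD trX addr0.
  by rewrite /rho -MM -trM; apply: density_normalized_sq; rewrite ?trM.
have KD_rho X : (forall x, KD A B X x = 0) -> KD A B (rho X) = KD A B ((\tr S)^-1 *: S).
  by move=> KD_X; apply: boolp.funext => x; rewrite !KDZ KDD KD_X addr0.
have trHH : \tr (H + H) = 0 by rewrite mxtraceD trH addr0.
have KD_HH x : KD A B (H + H) x = 0 by rewrite KDD KD_H addr0.
have KD_NHH x : KD A B (- (H + H)) x = 0 by rewrite KDN KD_HH oppr0.
have trNHH : \tr (- (H + H)) = 0 by rewrite raddfN /= trHH oppr0.
have hHp : (1%:M + H)^t* = 1%:M + H by rewrite trmxCD trmxC1 hH.
have hHm : (1%:M - H)^t* = 1%:M - H by rewrite trmxCD trmxCN trmxC1 hH.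
have := hKD _ _ (rho_density _ _ hHp sqD trHH) (rho_density _ _ hHm sqB trNHH).
rewrite KD_rho // [in RHS]KD_rho // => /(_ erefl) /scalerI.
rewrite invr_eq0 trS_neq0 => /(_ isT) /addrI /eqP; rewrite -subr_eq0 opprK.
by move/eqP/addmx_self_eq0/addmx_self_eq0.
Qed.

Lemma KD_distinguishes_dim N N' (A B : 'M[C]_N) : (0 < N)%N ->
  hermitian_op A -> num_distinct_eigs A N ->
  hermitian_op B -> num_distinct_eigs B N' ->
  KD_distinguishes A B -> (N * N + N + N' <= 2 * N * N' + 1)%N.
Proof.
move=> N_gt0 hA [sA [uA szA eigA]] hB [sB [uB szB eigB]] hKD.
rewrite leqNgt; apply/negP => dim_lt.
have [|H [H_neq0 hH trH KD_H]] := exists_herm_eigen_kd_kernel N_gt0 hA hB uA eigA uB eigB.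
  by rewrite szA szB; nia.
move/negP: H_neq0; apply; apply/eqP.
by apply: (KD_distinguishes_kernel_trivial N_gt0 hKD hH trH) => x; apply: KD_H.
Qed.

End KirkwoodDirac.

Theorem corollary2 (R : realType) (N N' : nat) (A B : 'M[R[i]]_N) :
  (0 < N)%N ->
  hermitian_op A -> num_distinct_eigs A N ->
  hermitian_op B -> num_distinct_eigs B N' ->
  KD_distinguishes A B ->
  (N'%:R : R) >= ((N ^ 2 + N)%:R - 1) / ((2 * N)%:R - 1) /\
  ((N = 2 \/ N = 3) -> N' = N).
Proof.
move=> N_gt0 hA eigA hB eigB hKD.
have dim := KD_distinguishes_dim N_gt0 hA eigA hB eigB hKD.
have N'_le_N := num_distinct_eigs_leq eigB.
split; last by case=> N_small; subst N; lia.
have N_ge1 : (1 <= N%:R :> R) by rewrite ler1n.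
have dimR : ((N * N + N + N')%:R <= (2 * N * N' + 1)%:R :> R) by rewrite ler_nat.
rewrite !natrD !natrM in dimR.
rewrite ler_pdivrMr; last by rewrite natrM subr_gt0; lra.
rewrite natrD natrX natrM; nra.
Qed.
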